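(* Let $G$ be a connected graph with $\delta(G)=1$, girth at least $15$, and $G\in\mathcal U$. Then no two single star support vertices of $G$ are at distance exactly $4$.
   Context: All graphs are finite and simple. A set $P\subseteq V(G)$ is an open packing if no two distinct vertices of $P$ have a common neighbor; it is maximal if maximal under inclusion among open packings. $\rho^o(G)$ is the maximum size of an open packing and $\rho^o_L(G)$ the minimum size of a maximal open packing; $\mathcal U$ is the class of graphs with $\rho^o_L(G)=\rho^o(G)$. A leaf is a vertex of degree $1$; a support vertex is a vertex adjacent to at least one leaf. A single star support vertex is a support vertex not adjacent to any other support vertex. *)

From mathcomp Require Import all_boot.
Set Implicit Arguments. Unset Strict Implicit. Unset Printing Implicit Defensive.

(* A finite simple graph: vertex type T : finType, adjacency e : rel T,
   assumed symmetric and irreflexive (hypotheses in the theorem). *)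
Section Graph.
Variables (T : finType) (e : rel T).

Definition nbhd (v : T) : {set T} := [set u | e v u].
Definition deg (v : T) : nat := #|nbhd v|.

Definition open_packingb (P : {set T}) : bool :=
  [forall x in P, forall y in P, (x != y) ==> [disjoint nbhd x & nbhd y]].

Definition maximal_open_packingb (P : {set T}) : bool :=
  open_packingb P &&
  [forall Q : {set T}, (open_packingb Q && (P \subset Q)) ==> (Q == P)].

Definition rho_o : nat := \max_(P : {set T} | open_packingb P) #|P|.

(* rho^o_L(G): minimum size of a maximal open packing
   (#|T| is a harmless upper default, maximal open packings always exist) *)
Definition rho_oL : nat :=
  \big[minn/#|T|]_(P : {set T} | maximal_open_packingb P) #|P|.

Definition in_U : Prop := rho_oL = rho_o.

Definition connected : Prop := forall x y : T, connect e x y.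

Definition min_degree_one : Prop :=
  (forall v, 1 <= deg v) /\ (exists v, deg v = 1).

(* girth at least g: every cycle (sequence of >= 3 distinct vertices,
   consecutive ones adjacent, last adjacent to first) has length >= g.
   Acyclic graphs (infinite girth) satisfy this. *)
Definition girth_at_least (g : nat) : Prop :=
  forall c : seq T, uniq c -> cycle e c -> 3 <= size c -> g <= size c.

Definition leaf (v : T) : bool := deg v == 1.
Definition support (v : T) : bool := [exists u, e v u && leaf u].
Definition single_star_support (v : T) : bool :=
  support v && [forall u, e v u ==> ~~ support u].

Definition dist_eq (x y : T) (k : nat) : Prop :=
  (exists p : seq T, [/\ path e x p, last x p = y & size p = k]) /\
  (forall p : seq T, path e x p -> last x p = y -> k <= size p).

End Graph.

From Pilot Require Import Defs.
From mathcomp Require Import all_boot zify.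
(* zify loads the algebra library, whose [support] notation would hide the
   graph-theoretic one of Defs. *)
Import Defs.
Set Implicit Arguments. Unset Strict Implicit. Unset Printing Implicit Defensive.

(* Let u, v be single star supports joined by a shortest path u a b c v in a
   graph of girth at least 15 and minimum degree 1.  We exhibit a maximal open
   packing that is not maximum, contradicting rho_oL = rho_o.

   The engine is an exchange lemma (packing_exchange): if a member y of an open
   packing P clashes (shares a neighbour) with two non-clashing vertices x1, x2
   whose other clashes are already blocked by P, then a maximal open packing
   containing P gains a vertex by trading y for x1 and x2.
   - If some support vertex clashes with u (or v), trade their common
     neighbour for the two leaves (clashing_supports).
   - Otherwise every vertex s clashing with u or v, but not with b, starts a
     non-backtracking "branch" u w s m i (or from v) whose tip i blocks s
     (branch_exists).  The girth condition, through the absence of closed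
     non-backtracking walks of length at most 14 (no_short_closed_walk), shows
     that b together with these tips is an open packing; trading b for u and v
     concludes (distance_four_exchange). *)

Section OpenPackings.
Variables (T : finType) (e : rel T).

(* Two distinct vertices clash when they have a common neighbour, i.e. when
   they cannot both belong to an open packing. *)
Definition clash (x y : T) : bool := (x != y) && [exists k, e x k && e y k].

Lemma clashC x y : clash x y = clash y x.
Proof.
rewrite /clash eq_sym; congr (_ && _).
by apply/existsP/existsP => -[k /andP[xk yk]]; exists k; rewrite xk yk.
Qed.

Lemma clashxx x : clash x x = false.
Proof. by rewrite /clash eqxx. Qed.

Lemma clashP x y : reflect (x != y /\ exists k, e x k /\ e y k) (clash x y).
Proof.
apply: (iffP andP) => -[xy common]; split => //.
  by case/existsP: common => k /andP[xk yk]; exists k.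
by case: common => k [xk yk]; apply/existsP; exists k; rewrite xk yk.
Qed.

Lemma clashI x y k : x != y -> e x k -> e y k -> clash x y.
Proof. by move=> xy xk yk; apply/clashP; split=> //; exists k. Qed.

Lemma open_packingP (P : {set T}) :
  reflect {in P &, forall x y, ~~ clash x y} (open_packingb e P).
Proof.
have disjE x y : [disjoint nbhd e x & nbhd e y] = ~~ [exists k, e x k && e y k].
  apply/idP/existsPn => [/disjointFr nk k | nk].
    by apply/negP => /andP[xk yk]; move: (nk k); rewrite !inE xk yk => /(_ isT).
  rewrite disjoint_subset; apply/subsetP => k; rewrite !inE => xk.
  by move: (nk k); rewrite xk.
apply: (iffP forall_inP) => [op x y xP yP | noclash x xP].
  move/forall_inP/(_ y yP): (op x xP).
  by rewrite /clash disjE; case: (x != y).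
apply/forall_inP => y yP; apply/implyP => xy.
by move: (noclash x y xP yP); rewrite /clash xy disjE.
Qed.

(* Every open packing extends to a maximal one (take a largest superset). *)
Lemma maximal_extension (P : {set T}) : open_packingb e P ->
  exists2 S : {set T}, maximal_open_packingb e S & P \subset S.
Proof.
move=> opP; pose ext (Q : {set T}) := open_packingb e Q && (P \subset Q).
have extP : ext P by rewrite /ext opP subxx.
case: (arg_maxnP (fun Q : {set T} => #|Q|) extP) => S /andP[opS PS] Smax.
exists S => //; rewrite /maximal_open_packingb opS; apply/forallP => Q.
apply/implyP => /andP[opQ SQ]; rewrite eq_sym eqEcard SQ.
by apply: Smax; rewrite /ext opQ (subset_trans PS SQ).
Qed.

Lemma rho_oL_le (S : {set T}) : maximal_open_packingb e S -> rho_oL e <= #|S|.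
Proof.
move=> maxS; rewrite /rho_oL -big_filter.
have : S \in [seq Q <- index_enum _ | maximal_open_packingb e Q].
  by rewrite mem_filter maxS mem_index_enum.
elim: (filter _ _) => [|Q r IH] //; rewrite big_cons inE => /predU1P[<-|Sr].
  exact: geq_minl.
exact: leq_trans (geq_minr _ _) (IH Sr).
Qed.

Lemma rho_o_ge (S : {set T}) : open_packingb e S -> #|S| <= rho_o e.
Proof. by move=> opS; apply: leq_bigmax_cond. Qed.

(* The exchange argument behind both cases of the proof: if a vertex y of an
   open packing P can be traded for two non-clashing vertices x1, x2 whose other
   clashes are all already blocked by P, then extending P to a maximal open
   packing S and trading y in S yields an open packing larger than S, so a
   minimum maximal open packing is strictly smaller than a maximum one. *)
Lemma packing_exchange (P : {set T}) y x1 x2 :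
  open_packingb e P -> y \in P -> clash y x1 -> clash y x2 ->
  x1 != x2 -> ~~ clash x1 x2 ->
  (forall x z, x \in [set x1; x2] -> clash x z -> z != y ->
     exists2 p, p \in P & clash z p) ->
  rho_oL e < rho_o e.
Proof.
move=> opP yP yx1 yx2 x12 nx12 blocked.
have [S maxS PS] := maximal_extension opP.
have /open_packingP opS : open_packingb e S by case/andP: maxS.
have yS : y \in S by apply: (subsetP PS).
have outS x : x \in [set x1; x2] -> x \notin S.
  rewrite !inE => xx; apply/negP => xS; move: (opS y x yS xS).
  by case/orP: xx => /eqP->; rewrite ?yx1 ?yx2.
have away x z : x \in [set x1; x2] -> z \in S :\ y -> ~~ clash x z.
  move=> xx /setD1P[zy zS]; apply/negP => xz.
  have [p pP zp] := blocked x z xx xz zy.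
  by move: (opS z p zS (subsetP PS p pP)); rewrite zp.
pose S' := (S :\ y) :|: [set x1; x2].
have opS' : open_packingb e S'.
  apply/open_packingP => x z /setUP[xS|xx] /setUP[zS|zx].
  - by case/setD1P: xS => _ xS; case/setD1P: zS => _ zS; apply: opS.
  - by rewrite clashC; apply: away.
  - exact: away.
  - by move: xx zx; rewrite !inE => /orP[]/eqP-> /orP[]/eqP->;
      rewrite ?clashxx // clashC.
have cardS' : #|S'| = #|S|.+1.
  rewrite cardsU (cardsD1 y S) yS cards2 x12.
  suff /eqP-> : (S :\ y) :&: [set x1; x2] == set0 by rewrite cards0; lia.
  apply/set0Pn => -[z /setIP[/setD1P[_ zS] zx]].
  by move: (outS z zx); rewrite zS.
by rewrite (leq_ltn_trans (rho_oL_le maxS)) // -cardS' rho_o_ge.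
Qed.

End OpenPackings.

Section ShortClosedWalks.
Variables (T : finType) (e : rel T) (g : nat).
Hypothesis eirr : irreflexive e.
Hypothesis girth_g : girth_at_least e g.

(* A walk f 0, ..., f L is non-backtracking when f k <> f (k + 2); a closed
   non-backtracking walk of positive length below the girth cannot exist:
   either f 0, ..., f (L - 1) is a cycle, or a repeated vertex cuts out a
   strictly shorter closed non-backtracking walk. *)
Lemma no_short_closed_walk_fun (L : nat) (f : nat -> T) : 0 < L < g ->
  f L = f 0 -> (forall k, k < L -> e (f k) (f k.+1)) ->
  (forall k, k.+2 <= L -> f k != f k.+2) -> False.
Proof.
elim/ltn_ind: L f => L IH f /andP[L0 Lg] fL step nb.
have [uniqf|/(uniqPn (f 0))[i [j [ij]]]] := boolP (uniq (mkseq f L)); last first.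
  rewrite size_mkseq => jL; rewrite !nth_mkseq ?(ltn_trans ij) // => fij.
  apply: (IH (j - i) _ (fun k => f (i + k))).
  - by lia.
  - by lia.
  - by rewrite subnKC ?addn0 // ltnW.
  - by move=> k kL; rewrite addnS; apply: step; lia.
  - by move=> k kL; rewrite !addnS; apply: nb; lia.
have L3 : 3 <= L.
  case: L L0 Lg {IH uniqf} fL step nb => [|[|[|]]] //= _ _ fL step nb.
    by move: (step 0 isT); rewrite fL eirr.
  by move: (nb 0 isT); rewrite fL eqxx.
have cyc : cycle e (mkseq f L).
  rewrite (cycle_path (f 0)); apply/(pathP (f 0)) => -[|k].
    rewrite size_mkseq => kL /=.
    rewrite (last_nth (f 0)) size_mkseq nth_mkseq //.
    case: L L0 {IH uniqf L3 kL Lg nb} fL step => // n _ fL step.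
    rewrite /= nth_mkseq // -fL; exact: (step n (ltnSn n)).
  by rewrite size_mkseq => kL /=; rewrite !nth_mkseq ?step // ltnW.
by have := girth_g uniqf cyc; rewrite size_mkseq => /(_ L3); rewrite leqNgt Lg.
Qed.

(* Non-backtracking sequences of vertices: no entry equals the one two steps
   later.  Being a fixpoint, the predicate computes on explicit walks. *)
Fixpoint nonbacktracking (w : seq T) : bool :=
  if w is x :: ((_ :: z :: _) as w') then (x != z) && nonbacktracking w' else true.

Lemma nonbacktrackingP x0 w : nonbacktracking w ->
  forall k, k.+2 < size w -> nth x0 w k != nth x0 w k.+2.
Proof.
elim: w => [|x [|y [|z w]] IH] //= /andP[xz nbw] [|k] //= kw.
exact: (IH nbw k).
Qed.

Lemma no_short_closed_walk x p : 0 < size p < g -> path e x p -> last x p = x ->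
  nonbacktracking (x :: p) -> False.
Proof.
move=> size_p walk_p closed nb.
apply: (no_short_closed_walk_fun size_p (f := nth x (x :: p))).
- by rewrite /= -[RHS]closed (last_nth x).
- by move=> k kp; move/(pathP x): walk_p; apply.
- by move=> k kp; apply: nonbacktrackingP.
Qed.

End ShortClosedWalks.

Section Branches.
Variables (T : finType) (e : rel T).
Hypothesis esym : symmetric e.
Hypothesis eirr : irreflexive e.
Hypothesis girth15 : girth_at_least e 15.

(* Refute a configuration by exhibiting the closed walk x :: p, of length at
   most 14, all of whose edges and non-backtracking conditions are hypotheses
   (up to symmetry). *)
Ltac closed_walk x p :=
  apply: (no_short_closed_walk eirr girth15 (x := x) (p := p)) => //=;
  repeat (apply/andP; split); first [done | by rewrite esym | by rewrite eq_sym].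

(* A branch at x avoiding y: a non-backtracking walk x w s m i whose first
   step is not towards y.  The vertex s, at distance two from x, will be
   blocked in an open packing by the tip i. *)
Definition branch_walk (x y w s m i : T) : bool :=
  [&& e x w, e w s, e s m, e m i & [&& m != w, i != s, w != y & s != x]].

Definition branch (x y s i : T) : bool :=
  [exists w, exists m, branch_walk x y w s m i].

Lemma branchP x y s i :
  reflect (exists w m, branch_walk x y w s m i) (branch x y s i).
Proof.
apply: (iffP existsP) => [[w /existsP[m walk]]|[w [m walk]]]; first by exists w, m.
by exists w; apply/existsP; exists m.
Qed.

Lemma branch_clash x y s i : branch x y s i -> clash e s i.
Proof.
case/branchP=> w [m /and5P[_ _ sm mi /and4P[_ iNs _ _]]].
by apply: (clashI _ sm); rewrite 1?eq_sym // esym.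
Qed.

Lemma tip_no_clash_centre x y b s i : e x y -> e y b -> x != b ->
  s != b -> ~~ clash e s b -> branch x y s i -> ~~ clash e i b.
Proof.
move=> xy yb xNb sNb sb_free.
case/branchP=> w [m /and5P[xw ws sm mi /and4P[mNw iNs _ sNx]]].
apply/clashP => -[ib [k [ik bk]]].
have mNy : m != y.
  by apply: contraNneq sb_free => my; apply: (clashI sNb sm); rewrite my esym.
case: (eqVneq k m) => [km|kNm].
  by subst k; closed_walk x [:: w; s; m; b; y; x].
case: (eqVneq k y) => [ky|kNy]; last by closed_walk x [:: w; s; m; i; k; b; y; x].
subst k; case: (eqVneq i x) => [ix|iNx]; last by closed_walk x [:: w; s; m; i; y; x].
by subst i; closed_walk x [:: w; s; m; x].
Qed.

Lemma tip_not_adjacent_middle x y1 w1 s1 m1 i1 y2 w2 s2 m2 i2 :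
  branch_walk x y1 w1 s1 m1 i1 -> branch_walk x y2 w2 s2 m2 i2 -> s1 != s2 ->
  ~~ e i2 m1.
Proof.
move=> /and5P[xw1 ws1 sm1 mi1 /and4P[mNw1 iNs1 _ sNx1]].
move=> /and5P[xw2 ws2 sm2 mi2 /and4P[mNw2 iNs2 _ sNx2]] sNs; apply/negP => im.
case: (eqVneq i2 s1) => [is1|iNs].
  subst i2; case: (eqVneq m2 w1) => [mw|mNw]; last first.
    by closed_walk x [:: w1; s1; m2; s2; w2; x].
  by subst m2; closed_walk x [:: w1; s2; w2; x].
case: (eqVneq m1 m2) => [mm|mNm]; last first.
  by closed_walk x [:: w1; s1; m1; i2; m2; s2; w2; x].
subst m2; case: (eqVneq m1 w2) => [mw|mNw]; last first.
  by closed_walk x [:: w1; s1; m1; s2; w2; x].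
by subst w2; closed_walk x [:: w1; s1; m1; x].
Qed.

Lemma tips_no_clash_same_root x y1 s1 i1 y2 s2 i2 :
  branch x y1 s1 i1 -> branch x y2 s2 i2 -> s1 != s2 -> ~~ clash e i1 i2.
Proof.
move=> /branchP[w1 [m1 b1]] /branchP[w2 [m2 b2]] sNs.
apply/clashP => -[iNi [k [ik1 ik2]]].
case: (eqVneq k m1) => [km|kNm1].
  by subst k; apply: negP (tip_not_adjacent_middle b1 b2 sNs) ik2.
case: (eqVneq k m2) => [km|kNm2].
  subst k; have sNs' : s2 != s1 by rewrite eq_sym.
  by apply: negP (tip_not_adjacent_middle b2 b1 sNs') ik1.
move: b1 b2 => /and5P[xw1 ws1 sm1 mi1 /and4P[mNw1 iNs1 _ sNx1]].
move=> /and5P[xw2 ws2 sm2 mi2 /and4P[mNw2 iNs2 _ sNx2]].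
closed_walk x [:: w1; s1; m1; i1; k; i2; m2; s2; w2; x].
Qed.

(* A non-backtracking walk x y b y' x' of length four between distinct ends;
   in the main theorem, a shortest path between the two star supports. *)
Definition walk4 (x y b y' x' : T) : bool :=
  [&& e x y, e y b, e b y', e y' x' & [&& x != b, x' != b, y != y' & x != x']].

Lemma walk4_rev x y b y' x' : walk4 x y b y' x' -> walk4 x' y' b y x.
Proof.
case/and5P=> xy yb by' y'x' /and4P[xNb x'Nb yNy' xNx'].
by apply/and5P; split; rewrite 1?esym //; apply/and4P; split; rewrite // eq_sym.
Qed.

Lemma tip_not_adjacent_middle_far x y b y' x' w1 s1 m1 i1 w2 s2 m2 i2 :
  walk4 x y b y' x' -> branch_walk x y w1 s1 m1 i1 ->
  branch_walk x' y' w2 s2 m2 i2 -> s1 != s2 -> ~~ e i2 m1.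
Proof.
move=> /and5P[xy yb by' y'x' /and4P[xNb x'Nb yNy' xNx']].
move=> /and5P[xw1 ws1 sm1 mi1 /and4P[mNw1 iNs1 _ sNx1]].
move=> /and5P[xw2 ws2 sm2 mi2 /and4P[mNw2 iNs2 wNy2 sNx2]] sNs; apply/negP => im.
case: (eqVneq i2 s1) => [is1|iNs].
  subst i2; case: (eqVneq m2 w1) => [mw|mNw]; last first.
    by closed_walk x [:: w1; s1; m2; s2; w2; x'; y'; b; y; x].
  subst m2; case: (eqVneq s2 x) => [sx|sNx].
    by subst s2; closed_walk x [:: w2; x'; y'; b; y; x].
  case: (eqVneq w1 w2) => [ww|wNw]; last first.
    by closed_walk x [:: w1; s2; w2; x'; y'; b; y; x].
  by subst w2; closed_walk x [:: w1; x'; y'; b; y; x].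
case: (eqVneq m1 m2) => [mm|mNm]; last first.
  by closed_walk x [:: w1; s1; m1; i2; m2; s2; w2; x'; y'; b; y; x].
subst m2; case: (eqVneq m1 w2) => [mw|mNw]; last first.
  by closed_walk x [:: w1; s1; m1; s2; w2; x'; y'; b; y; x].
subst w2; case: (eqVneq s1 x') => [sx|sNx]; last first.
  by closed_walk x [:: w1; s1; m1; x'; y'; b; y; x].
subst s1; case: (eqVneq w1 y') => [wy|wNy]; last first.
  by closed_walk x [:: w1; x'; y'; b; y; x].
by subst w1; closed_walk x [:: y'; b; y; x].
Qed.

Lemma tips_no_clash_far x y b y' x' s1 i1 s2 i2 :
  walk4 x y b y' x' -> branch x y s1 i1 -> branch x' y' s2 i2 -> s1 != s2 ->
  ~~ clash e i1 i2.
Proof.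
move=> w4 /branchP[w1 [m1 b1]] /branchP[w2 [m2 b2]] sNs.
apply/clashP => -[iNi [k [ik1 ik2]]].
case: (eqVneq k m1) => [km|kNm1].
  by subst k; apply: negP (tip_not_adjacent_middle_far w4 b1 b2 sNs) ik2.
case: (eqVneq k m2) => [km|kNm2].
  subst k; have sNs' : s2 != s1 by rewrite eq_sym.
  by apply: negP (tip_not_adjacent_middle_far (walk4_rev w4) b2 b1 sNs') ik1.
move: w4 b1 b2 => /and5P[xy yb by' y'x' /and4P[xNb x'Nb yNy' xNx']].
move=> /and5P[xw1 ws1 sm1 mi1 /and4P[mNw1 iNs1 _ sNx1]].
move=> /and5P[xw2 ws2 sm2 mi2 /and4P[mNw2 iNs2 wNy2 sNx2]].
closed_walk x [:: w1; s1; m1; i1; k; i2; m2; s2; w2; x'; y'; b; y; x].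
Qed.

End Branches.

Section Supports.
Variables (T : finType) (e : rel T).
Hypothesis esym : symmetric e.

Lemma leaf_nbr x y z : leaf e x -> e x y -> e x z -> y = z.
Proof.
case/cards1P=> k nbx xy xz.
have : y \in nbhd e x by rewrite inE.
have : z \in nbhd e x by rewrite inE.
by rewrite nbx !inE => /eqP-> /eqP->.
Qed.

Lemma other_neighbour x w : 0 < deg e x -> ~~ leaf e x ->
  exists2 m, e x m & m != w.
Proof.
move=> dx nlx; apply/exists_inP; apply: contraR nlx => /exists_inPn nbw.
have : nbhd e x \subset [set w].
  by apply/subsetP => m; rewrite !inE => xm; apply/negPn/nbw.
by move/subset_leq_card; rewrite cards1 /leaf eqn_leq dx => ->.
Qed.

(* Two support vertices with a common neighbour w already force
   rho_oL < rho_o: trade w for the two leaves. *)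
Lemma clashing_supports x t : support e x -> support e t -> clash e x t ->
  rho_oL e < rho_o e.
Proof.
move=> /existsP[x' /andP[xx' lx']] /existsP[t' /andP[tt' lt']].
case/clashP=> xNt [w [xw tw]].
have leaf_nbrs l y z : leaf e l -> e y l -> e z l -> y = z.
  by move=> ll yl zl; apply: (leaf_nbr ll); rewrite esym.
have wNleaf l : leaf e l -> w != l.
  move=> ll; apply: contra_neq xNt => wl; rewrite -wl in ll.
  exact: (leaf_nbrs w).
apply: (packing_exchange (P := [set w]) (y := w) (x1 := x') (x2 := t')).
- by apply/open_packingP => p q; rewrite !inE => /eqP-> /eqP->; rewrite clashxx.
- by rewrite inE.
- by apply: (clashI (k := x) (wNleaf x' lx')); rewrite esym.
- by apply: (clashI (k := t) (wNleaf t' lt')); rewrite esym.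
- apply: contra_neq xNt => x't'; apply: (leaf_nbrs x') => //.
  by rewrite x't'.
- apply/clashP => -[_ [k [x'k t'k]]]; move/eqP: xNt; apply.
  have kx : k = x by apply: (leaf_nbrs x'); rewrite // esym.
  have kt : k = t by apply: (leaf_nbrs t'); rewrite // esym.
  by rewrite -kx -kt.
- move=> l z; rewrite !inE => ll /clashP[_ [k [lk zk]]] zNw.
  exists w; first by rewrite inE.
  apply: (clashI zNw zk).
  have [->|->] : k = x \/ k = t.
    by case/orP: ll => /eqP ll; subst l;
      [left; apply: (leaf_nbrs x') | right; apply: (leaf_nbrs t')]; rewrite // esym.
  all: by rewrite esym.
Qed.

Lemma nonsupport_nbr x y : ~~ support e x -> e x y -> ~~ leaf e y.
Proof.
by move=> nsx xy; apply: contra nsx => ly; apply/existsP; exists y; rewrite xy.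
Qed.

(* Every vertex s clashing with a single star support x, but not with the
   vertex b at distance two from x via y, has a branch at x through s:
   its common neighbour w with x is not a support (x is a single star support),
   so s is not a leaf and continues to some m; s itself is not a support (it
   clashes with x), so m is not a leaf and continues to some tip i. *)
Lemma branch_exists x y b s : single_star_support e x ->
  (forall v, 0 < deg e v) -> (forall t, clash e x t -> ~~ support e t) ->
  e x y -> e y b -> clash e s x -> ~~ clash e s b -> s != b ->
  exists i, branch e x y s i.
Proof.
case/andP=> _ /forallP star pos no_support xy yb.
case/clashP=> sNx [w [sw xw]] sb_free sNb.
have ws : e w s by rewrite esym.
have wNy : w != y.
  by apply: contraNneq sb_free => wy; apply: (clashI sNb sw); rewrite wy esym.
have nsw : ~~ support e w := implyP (star w) xw.
have [m sm mNw] := other_neighbour w (pos s) (nonsupport_nbr nsw ws).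
have nss : ~~ support e s.
  by apply: no_support; rewrite clashC; apply: (clashI sNx sw).
have [i mi iNs] := other_neighbour s (pos m) (nonsupport_nbr nss sm).
exists i; apply/branchP; exists w, m.
by rewrite /branch_walk xw ws sm mi mNw iNs wNy sNx.
Qed.

Lemma support_clash_dec x :
  (exists2 t, clash e x t & support e t) \/ (forall t, clash e x t -> ~~ support e t).
Proof.
case: (boolP [exists t in clash e x, support e t]) => [/exists_inP[t xt st]|].
  by left; exists t.
by move/exists_inPn => none; right => t xt; apply: none.
Qed.

End Supports.

Section DistanceFour.
Variables (T : finType) (e : rel T).
Hypothesis esym : symmetric e.
Hypothesis eirr : irreflexive e.
Hypothesis girth15 : girth_at_least e 15.
Variables (u a b c v : T).
Hypothesis star_u : single_star_support e u.
Hypothesis star_v : single_star_support e v.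
Hypothesis pos_deg : forall x, 0 < deg e x.
Hypothesis no_support_u : forall t, clash e u t -> ~~ support e t.
Hypothesis no_support_v : forall t, clash e v t -> ~~ support e t.
Hypothesis uv_walk : walk4 e u a b c v.

Definition unblocked : {set T} :=
  [set s | [&& clash e s u || clash e s v, ~~ clash e s b & s != b]].

Definition blocker (s : T) : T :=
  odflt s [pick i | branch e u a s i || branch e v c s i].

Lemma blockerP s : s \in unblocked ->
  branch e u a s (blocker s) || branch e v c s (blocker s).
Proof.
have /and5P[ua ab bc cv _] := uv_walk.
rewrite inE /blocker => /and3P[/orP[su|sv] sb_free sNb]; case: pickP => // none.
  have [i] := branch_exists esym star_u pos_deg no_support_u ua ab su sb_free sNb.
  by move=> bi; move: (none i); rewrite /= bi.
have cb : e c b by rewrite esym.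
have vc : e v c by rewrite esym.
have [i] := branch_exists esym star_v pos_deg no_support_v vc cb sv sb_free sNb.
by move=> bi; move: (none i); rewrite /= bi orbT.
Qed.

Lemma blockers_open_packing : open_packingb e (b |: blocker @: unblocked).
Proof.
have /and5P[ua ab bc cv /and4P[uNb vNb _ _]] := uv_walk.
have vc : e v c by rewrite esym.
have cb : e c b by rewrite esym.
have free_b s : s \in unblocked -> ~~ clash e (blocker s) b.
  move=> sS; move: (blockerP sS); move: sS; rewrite inE => /and3P[_ sb_free sNb].
  case/orP => [bu|bv]; first exact: tip_no_clash_centre ua ab uNb sNb sb_free bu.
  exact: tip_no_clash_centre vc cb vNb sNb sb_free bv.
have apart s1 s2 : s1 \in unblocked -> s2 \in unblocked ->
    ~~ clash e (blocker s1) (blocker s2).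
  move=> s1S s2S; have [<-|sNs] := eqVneq s1 s2; first by rewrite clashxx.
  move: (blockerP s1S) (blockerP s2S) => /orP[b1|b1] /orP[b2|b2].
  - exact: tips_no_clash_same_root b1 b2 sNs.
  - exact: tips_no_clash_far uv_walk b1 b2 sNs.
  - exact: tips_no_clash_far (walk4_rev esym uv_walk) b1 b2 sNs.
  - exact: tips_no_clash_same_root b1 b2 sNs.
apply/open_packingP => x y.
case/setU1P=> [->|/imsetP[s1 s1S ->]] /setU1P[->|/imsetP[s2 s2S ->]].
- by rewrite clashxx.
- by rewrite clashC free_b.
- exact: free_b.
- exact: apart.
Qed.

(* If moreover u and v do not clash, trade b for u and v in this packing. *)
Lemma distance_four_exchange : ~~ clash e u v -> rho_oL e < rho_o e.
Proof.
move=> uv_free; have /and5P[ua ab bc cv /and4P[uNb vNb _ uNv]] := uv_walk.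
apply: (packing_exchange (x1 := u) (x2 := v) blockers_open_packing (setU11 _ _))
  => //.
- by apply: (clashI (k := a)); rewrite 1?eq_sym // esym.
- by apply: (clashI (k := c)); rewrite 1?eq_sym // esym.
move=> x z xuv xz zNb; have [zb|zb_free] := boolP (clash e z b).
  by exists b; rewrite ?setU11.
have zS : z \in unblocked.
  rewrite inE zb_free zNb !andbT !(clashC e z).
  by case/set2P: xuv xz => -> ->; rewrite ?orbT.
exists (blocker z); first by rewrite setU1r // imset_f.
by case/orP: (blockerP zS); apply: branch_clash.
Qed.

End DistanceFour.

Theorem claim3 (T : finType) (e : rel T)
  (esym : symmetric e) (eirr : irreflexive e)
  (Hconn : connected e) (Hdelta : min_degree_one e)
  (Hgirth : girth_at_least e 15) (HU : in_U e) :
  forall u v : T, single_star_support e u -> single_star_support e v ->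
    ~ dist_eq e u v 4.
Proof.
move=> u v star_u star_v [[p [walk_p end_p size_p]] shortest].
suff : rho_oL e < rho_o e by rewrite HU ltnn.
have short q : path e u q -> last u q = v -> size q < 4 -> False.
  by move=> walk_q end_q; rewrite ltnNge shortest.
case: p walk_p end_p size_p => [|a [|b [|c [|d [|]]]]] //=.
move=> /and4P[ua ab bc /andP[cd _]] dv _; subst d.
have uv_walk : walk4 e u a b c v.
  apply/and5P; split=> //; apply/and4P; split; apply/eqP => eq_ends.
  - by subst u; apply: (short [:: c; v]); rewrite //= bc cd.
  - by subst v; apply: (short [:: a; b]); rewrite //= ua ab.
  - by subst c; apply: (short [:: a; v]); rewrite //= ua cd.
  - by subst v; apply: (short [::]).
have uv_free : ~~ clash e u v.
  apply/clashP => -[_ [k [uk vk]]].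
  by apply: (short [:: k; v]); rewrite //= uk esym vk.
have pos x : 0 < deg e x by case: Hdelta.
have [[t ut st]|nsu] := support_clash_dec e u.
  by apply: (clashing_supports esym _ st ut); case/andP: star_u.
have [[t vt st]|nsv] := support_clash_dec e v.
  by apply: (clashing_supports esym _ st vt); case/andP: star_v.
exact: (distance_four_exchange esym eirr Hgirth star_u star_v pos nsu nsv
  uv_walk uv_free).
Qed.
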